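(* Let $f_0$ be a probability density on a sample space $\mathcal{X}$ and let $\mathcal{X}_n=\{x_1,\dots,x_n\}$ be drawn independently from $f_0$. Let $\mathcal{F}$ be the space of densities on $\mathcal{X}$, let $\Pi(\mathcal{X}_n)$ be the (finite) set of sub-partitions of $\mathcal{X}_n$, and let $\psi,\tilde\psi:\mathcal{F}\to\Pi(\mathcal{X}_n)$ be maps (possibly depending on $\mathcal{X}_n$ and $n$). Let $P_M(\cdot\mid\mathcal{X}_n)$ be the posterior distribution of $f\in\mathcal{F}$ under a Bayesian model $M$, and let $$\hat{\mathbf{C}}\in\operatorname*{argmin}_{\mathbf{C}\in\Pi(\mathcal{X}_n)} E_{f\sim P_M(\cdot\mid\mathcal{X}_n)}\big[D\{\tilde\psi(f),\mathbf{C}\}\big].$$ Assume: (A1) $D:\Pi(\mathcal{X}_n)\times\Pi(\mathcal{X}_n)\to[0,1]$ is a metric; (A2) there is a metric $\rho$ on $\mathcal{F}$ and a non-negative sequence $\epsilon_n\to 0$ such that for every non-negative sequence $K_n\to\infty$, $P_M\big(f:\rho(f,f_0)\ge \epsilon_n K_n\mid\mathcal{X}_n\big)\to 0$ in probability as $n\to\infty$; (A3) there is a non-negative sequence $K_n\to\infty$ such that $\tau_2(\mathcal{X}_n):=\sup_{f\in\mathcal{F}:\rho(f,f_0)\le K_n\epsilon_n} D\{\tilde\psi(f),\psi(f_0)\}\to 0$ in probability as $n\to\infty$, with $\rho,\epsilon_n$ as in (A2). Let $\tau_1(\mathcal{X}_n):=P_M\big(f:\rho(f,f_0)\ge \epsilon_n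 K_n\mid\mathcal{X}_n\big)$ with $K_n$ the sequence from (A3). Then $$0\le D\{\hat{\mathbf{C}},\psi(f_0)\}\le 2\tau_1(\mathcal{X}_n)+2\tau_2(\mathcal{X}_n)\to 0\quad\text{in probability as } n\to\infty.$$
   Context: A sub-partition of a finite set $\mathcal{X}_n$ is a collection $\{C_1,\dots,C_k\}$ ($k\ge 0$) of non-empty, pairwise disjoint subsets of $\mathcal{X}_n$ (their union may be a proper subset of $\mathcal{X}_n$; points not in the union are called noise/inactive points). Convergence in probability of random variables $X_n\to 0$ means $\Pr(|X_n|>\epsilon)\to 0$ for every fixed $\epsilon>0$. *)

From HB Require Import structures.
From mathcomp Require Import all_boot all_order all_algebra.
From mathcomp Require Import all_classical all_reals all_analysis.
Set Implicit Arguments. Unset Strict Implicit. Unset Printing Implicit Defensive.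
Import Order.TTheory GRing.Theory Num.Theory.
Local Open Scope classical_set_scope.
Local Open Scope ring_scope.

(* Sub-partitions of the (indexed) sample {x_0,...,x_{n-1}}: collections of
   non-empty pairwise disjoint blocks of indices (noise points allowed). *)
Definition is_subpart (n : nat) (C : {set {set 'I_n}}) : bool :=
  finset.trivIset C && (finset.set0 \notin C).

Definition subpart (n : nat) := {C : {set {set 'I_n}} | is_subpart C}.

Definition is_metric01 {R : realType} {T : Type} (D : T -> T -> R) : Prop :=
  [/\ forall a b, 0 <= D a b <= 1,
      forall a b, D a b = 0 <-> a = b,
      forall a b, D a b = D b a &
      forall a b c, D a c <= D a b + D b c].

Definition is_metric {R : realType} {T : Type} (rho : T -> T -> R) : Prop :=
  [/\ forall a b, 0 <= rho a b,
      forall a b, rho a b = 0 <-> a = b,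
      forall a b, rho a b = rho b a &
      forall a b c, rho a c <= rho a b + rho b c].

Definition is_density {R : realType} {dX} {X : measurableType dX}
  (mu : {measure set X -> \bar R}) (g : X -> R) : Prop :=
  [/\ forall x, 0 <= g x, measurable_fun setT g &
      (\int[mu]_x (g x)%:E = 1)%E].

Definition iid_density {R : realType} {dO dX} {O : measurableType dO}
  {X : measurableType dX} (P : probability O R)
  (mu : {measure set X -> \bar R}) (g : X -> R) (xs : nat -> O -> X) : Prop :=
  [/\ forall i, measurable_fun setT (xs i),
      forall i A, measurable A ->
        P (xs i @^-1` A) = (\int[mu]_(x in A) (g x)%:E)%E &
      forall (s : seq nat) (A : nat -> set X), uniq s ->
        (forall i, measurable (A i)) ->
        P (\big[setI/setT]_(i <- s) (xs i @^-1` A i)) =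
        (\prod_(i <- s) P (xs i @^-1` A i))%E].

Definition cvg_in_prob0 {R : realType} {dO} {O : measurableType dO}
  (P : probability O R) (Y : nat -> O -> R) : Prop :=
  (forall n, measurable_fun setT (Y n)) /\
  forall e : R, 0 < e ->
    P [set w | e < `|Y n w|] @[n --> \oo] --> 0%E.

From HB Require Import structures.
From mathcomp Require Import all_boot all_order all_algebra.
From mathcomp Require Import all_classical all_reals all_analysis.
From mathcomp Require Import measurable_realfun lra.
Import Order.TTheory GRing.Theory Num.Theory.
Local Open Scope classical_set_scope.
Local Open Scope ring_scope.

(* If the posterior puts mass at most tau1 outside a rho-ball around f0, and on
   that ball the loss D(psit f, psi f0) is at most tau2, then the expected loss
   of psi f0 is at most tau1 + tau2 because D <= 1.  The minimiser Chat has
   expected loss no larger, and integrating the triangle inequality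
   D(Chat, psi f0) <= D(psit f, Chat) + D(psit f, psi f0) against the posterior
   gives D(Chat, psi f0) <= 2 tau1 + 2 tau2.  Both tau1 (by A2 with K_n) and
   tau2 (by A3) tend to 0 in probability, and so does 2 tau1 + 2 tau2. *)

Section BoundedLoss.
Context {R : realType} {d : measure_display} {F : measurableType d}.
Context (mu : probability F R) {T : Type} {D : T -> T -> R} {g : F -> T}.
Hypothesis D_metric : is_metric01 D.
Hypothesis measurable_loss : forall c, measurable_fun setT (fun f => D (g f) c).

Let D_ge0 a b : 0 <= D a b.
Proof. by case: D_metric => /(_ a b)/andP[]. Qed.

Let D_le1 a b : D a b <= 1.
Proof. by case: D_metric => /(_ a b)/andP[]. Qed.

Let lossE_ge0 c : forall f, [set: F] f -> (0 <= (D (g f) c)%:E)%E.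
Proof. by move=> f _; rewrite lee_fin D_ge0. Qed.

Let measurable_lossE c : measurable_fun setT (fun f => (D (g f) c)%:E : \bar R).
Proof. exact/measurable_EFinP/measurable_loss. Qed.

Lemma dist_le_expected_loss (c a : T) :
  ((D c a)%:E <= \int[mu]_f (D (g f) c)%:E + \int[mu]_f (D (g f) a)%:E)%E.
Proof.
case: D_metric => _ _ D_sym D_tri.
rewrite -ge0_integralD//; [|exact: lossE_ge0..].
rewrite -[X in (X <= _)%E]mule1 -(probability_setT mu) -integral_cst//.
apply: ge0_le_integral => //.
- by move=> f _; rewrite lee_fin D_ge0.
- exact: emeasurable_funD.
- by move=> f _; rewrite -EFinD lee_fin (D_sym (g f) c); exact: D_tri.
Qed.

Lemma expected_loss_le (a : T) (A : set F) (t : R) :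
  measurable A -> 0 <= t -> (forall f, ~ A f -> D (g f) a <= t) ->
  (\int[mu]_f (D (g f) a)%:E <= mu A + t%:E)%E.
Proof.
move=> mA t_ge0 near_a.
have mindic : measurable_fun setT (fun f => (\1_A f)%:E : \bar R).
  exact/measurable_EFinP/measurable_indic.
rewrite -[X in (_ <= _ + X)%E]mule1 -(probability_setT mu) -integral_cst//.
rewrite -(setIT A) -integral_indic// -ge0_integralD//.
apply: ge0_le_integral => //.
- exact: lossE_ge0.
- by apply: emeasurable_funD => //; exact: measurable_cst.
move=> f _; rewrite -EFinD lee_fin indicE.
have [Af|nAf] := pselect (A f).
  by rewrite mem_set// -[D _ _]addr0 lerD ?D_le1.
by rewrite memNset// add0r near_a.
Qed.

Lemma bayes_estimator_dist_le (c a : T) (A : set F) (t : R) :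
  (forall C, (\int[mu]_f (D (g f) c)%:E <= \int[mu]_f (D (g f) C)%:E)%E) ->
  measurable A -> 0 <= t -> (forall f, ~ A f -> D (g f) a <= t) ->
  D c a <= 2 * fine (mu A) + 2 * t.
Proof.
move=> c_min mA t_ge0 near_a.
have risk_le := expected_loss_le a A t mA t_ge0 near_a.
have := le_trans (dist_le_expected_loss c a) (leeD (c_min a) (lexx _)).
move=> /le_trans /(_ (leeD risk_le risk_le)).
rewrite -(fineK (fin_num_measure mu _ mA)) -!EFinD lee_fin.
lra.
Qed.

End BoundedLoss.

Section SupOfUnitInterval.
Context {R : realType} {T : Type} {h : T -> R} (S : set T).
Hypothesis h01 : forall x, 0 <= h x <= 1.

Lemma le_sup_image x : S x -> h x <= sup (h @` S).
Proof.
move=> Sx; apply: ub_le_sup; last by exists x.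
by exists 1 => _ [y _ <-]; case/andP: (h01 y).
Qed.

Lemma sup_image_ge0 : 0 <= sup (h @` S).
Proof.
have [->|/set0P[x Sx]] := eqVneq S set0; first by rewrite image_set0 sup0.
by have /andP[hx_ge0 _] := h01 x; exact: le_trans hx_ge0 (le_sup_image x Sx).
Qed.

End SupOfUnitInterval.

Section ConvergenceInProbability.
Context {R : realType} {d : measure_display} {O : measurableType d}.

Lemma measurable_ler_set (Y : O -> R) (e : R) :
  measurable_fun setT Y -> measurable [set w | e <= Y w].
Proof. by move=> mY; rewrite -preimage_itvcy -[_ @^-1` _]setTI; exact: mY. Qed.

Lemma measurable_ltr_norm_set (Y : O -> R) (e : R) :
  measurable_fun setT Y -> measurable [set w | e < `|Y w|].
Proof.
move=> mY; rewrite -[[set _ | _]](preimage_itvoy (fun w => `|Y w|)).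
by rewrite -[_ @^-1` _]setTI; exact: measurableT_comp.
Qed.

Context (P : probability O R).

Lemma cvg_in_prob0D (Y Z : nat -> O -> R) :
  cvg_in_prob0 P Y -> cvg_in_prob0 P Z ->
  cvg_in_prob0 P (fun n w => Y n w + Z n w).
Proof.
move=> [mY cY] [mZ cZ]; split=> [n|e e_gt0]; first exact: measurable_funD.
have e2_gt0 : 0 < e / 2 by rewrite divr_gt0.
apply: (squeeze_cvge _ (cvg_cst 0%E) _ : _ @ _ --> _);
  last by rewrite -[0%E]adde0; apply: cvgeD; [| exact: cY e2_gt0 | exact: cZ e2_gt0].
apply: nearW => n; rewrite measure_ge0 /=.
apply: le_trans _ (measureU2 P (measurable_ltr_norm_set _ _ (mY n))
                               (measurable_ltr_norm_set _ _ (mZ n))).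
apply: le_measure; rewrite ?inE.
- exact/measurable_ltr_norm_set/measurable_funD.
- by apply: measurableU; exact: measurable_ltr_norm_set.
move=> w /= e_lt.
have [hY|hY] := ltP (e / 2) `|Y n w|; first by left.
have [hZ|hZ] := ltP (e / 2) `|Z n w|; first by right.
by have := ler_normD (Y n w) (Z n w); lra.
Qed.

Lemma cvg_in_prob0Zl (k : R) (Y : nat -> O -> R) :
  cvg_in_prob0 P Y -> cvg_in_prob0 P (fun n w => k * Y n w).
Proof.
move=> [mY cY]; split=> [n|e e_gt0].
  exact: measurable_funM.
have [->|k_neq0] := eqVneq k 0.
  rewrite (_ : (fun n => _) = cst 0%E); first exact: cvg_cst.
  apply/funext => n; rewrite -(measure0 P); congr (P _).
  by apply/seteqP; split=> w //=; rewrite mul0r normr0 ltNge ltW.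
have k_gt0 : 0 < `|k| by rewrite normr_gt0.
rewrite (_ : (fun n => _) = fun n => P [set w | e / `|k| < `|Y n w|]).
  by apply: cY; rewrite divr_gt0.
apply/funext => n; congr (P _); apply: eq_set => w.
by rewrite normrM ltr_pdivrMr// mulrC.
Qed.

End ConvergenceInProbability.

Theorem theorem1
  (R : realType)
  (dO : measure_display) (Omega : measurableType dO) (P : probability Omega R)
  (dX : measure_display) (X : measurableType dX) (mu : {measure set X -> \bar R})
  (dF : measure_display) (F : measurableType dF) (dens : F -> X -> R)
  (dens_inj : injective dens)
  (dens_range : range dens = [set g | is_density mu g])
  (f0 : F) (xs : nat -> Omega -> X)
  (Hiid : iid_density P mu (dens f0) xs)
  (post : nat -> Omega -> probability F R)
  (psi psit : forall n : nat, Omega -> F -> subpart n)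
  (D : forall n : nat, Omega -> subpart n -> subpart n -> R)
  (Chat : forall n : nat, Omega -> subpart n)
  (Hmeas_loss : forall n w C,
      measurable_fun setT (fun f => D n w (psit n w f) C))
  (Hargmin : forall n w (C : subpart n),
      (\int[post n w]_f (D n w (psit n w f) (Chat n w))%:E <=
       \int[post n w]_f (D n w (psit n w f) C)%:E)%E)
  (A1 : forall n w, is_metric01 (D n w))
  (rho : F -> F -> R) (eps : nat -> R)
  (Hrho : is_metric rho)
  (Hrho_meas : measurable_fun setT (fun f => rho f f0))
  (eps_ge0 : forall n, 0 <= eps n)
  (eps_cvg : eps n @[n --> \oo] --> 0)
  (A2 : forall K' : nat -> R, (forall n, 0 <= K' n) ->
      K' n @[n --> \oo] --> +oo ->
      cvg_in_prob0 P
        (fun n w => fine (post n w [set f | eps n * K' n <= rho f f0])))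
  (K : nat -> R) (K_ge0 : forall n, 0 <= K n)
  (K_cvg : K n @[n --> \oo] --> +oo)
  (A3 : cvg_in_prob0 P
      (fun n w => sup [set D n w (psit n w f) (psi n w f0)
                      | f in [set f | rho f f0 <= K n * eps n]])) :
  let tau1 := fun n w => fine (post n w [set f | eps n * K n <= rho f f0]) in
  let tau2 := fun n w => sup [set D n w (psit n w f) (psi n w f0)
                             | f in [set f | rho f f0 <= K n * eps n]] in
  (forall n w, 0 <= D n w (Chat n w) (psi n w f0) <= 2 * tau1 n w + 2 * tau2 n w)
  /\ cvg_in_prob0 P (fun n w => 2 * tau1 n w + 2 * tau2 n w).
Proof.
move=> tau1 tau2.
have D01 n w a b : 0 <= D n w a b <= 1 by case: (A1 n w).
have loss01 n w f : 0 <= D n w (psit n w f) (psi n w f0) <= 1 by exact: D01.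
split=> [n w|].
  rewrite (andP (D01 _ _ _ _)).1 /=.
  apply: (bayes_estimator_dist_le _ (A1 n w) (Hmeas_loss n w)) => //.
  - exact/measurable_ler_set.
  - exact: sup_image_ge0 (loss01 n w).
  move=> f /negP; rewrite -ltNge => near_f0.
  apply: (le_sup_image _ (loss01 n w)).
  by rewrite /= mulrC ltW.
by apply: cvg_in_prob0D; apply: cvg_in_prob0Zl; [exact: A2 | exact: A3].
Qed.
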